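(* Let $N\in\mathbb N$. For all nonzero $f,g\in R_J(N)$, $$\nu_J(fg)=\nu_J(f)+\nu_J(g),$$ where the right-hand side is the Minkowski sum of subsets of $\mathbb R^2$.
   Context: $R(N)=\mathbb C[\zeta^{1/N},\zeta^{-1/N}]((q^{1/N}))$ is the ring of formal series $f=\sum_{n,r\in\frac1N\mathbb Z}c(n,r)q^n\zeta^r$ such that for each $n$ only finitely many $r$ have $c(n,r)\ne0$ and $n$ is bounded below on the support $\operatorname{supp}(f)=\{(n,r): c(n,r)\neq0\}$. $R_J(N)$ is the set of $f\in R(N)$ for which there exist $a>0$ and $b,c\in\mathbb R$ with $\operatorname{supp}(f)\subseteq\{(n,r)\in\mathbb R^2: n\ge ar^2+br+c\}$ (it is a subring of $R(N)$). For $P\subseteq\mathbb R^2$, $\operatorname{conv}(P;\vec A)=\operatorname{conv}(P)+[0,\infty)\times\{0\}$. The Jacobi valuation is $\nu_J(f)=\operatorname{Closure}_{\mathbb R^2}(\operatorname{conv}(\operatorname{supp}(f);\vec A))$. *)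

From HB Require Import structures.
From mathcomp Require Import all_boot all_order all_algebra.
From mathcomp Require Import complex.
From mathcomp Require Import all_classical all_reals all_analysis.
From mathcomp Require Import Rstruct Rstruct_topology.
From Stdlib Require Import Rdefinitions.
Set Implicit Arguments. Unset Strict Implicit. Unset Printing Implicit Defensive.
Import Order.TTheory GRing.Theory Num.Theory.
Local Open Scope classical_set_scope.
Local Open Scope ring_scope.

Notation Rl := Rdefinitions.R.
Notation CC := (complex Rl).

(* A formal series f = sum c(n,r) q^n zeta^r with n, r in (1/N)Z is encoded by
   its coefficient function: coef f k l = c(k/N, l/N), for k l : int. *)
Definition jseries := int -> int -> CC.

Definition inRN (f : jseries) : Prop :=
  (forall k : int, finite_set [set l : int | f k l != 0]) /\
  (exists k0 : int, forall k l, f k l != 0 -> k0 <= k).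

Definition jsupp (N : nat) (f : jseries) : set (Rl * Rl) :=
  [set p | exists k l : int, f k l != 0 /\
     p = ((k%:~R / N%:R : Rl), (l%:~R / N%:R : Rl))].

Definition inRJ (N : nat) (f : jseries) : Prop :=
  inRN f /\
  exists a b c : Rl, 0 < a /\
    jsupp N f `<=` [set p | p.1 >= a * p.2 ^+ 2 + b * p.2 + c].

(* Product of series (Cauchy product), coefficientwise; the sum has finite
   support for f, g in R(N). *)
Definition jmul (f g : jseries) : jseries :=
  fun k l => \sum_(p \in [set: int * int]) f p.1 p.2 * g (k - p.1) (l - p.2).

Definition nonzero_series (f : jseries) : Prop := exists k l, f k l != 0.

Definition jconv (P : set (Rl * Rl)) : set (Rl * Rl) :=
  [set x | exists (n : nat) (pts : 'I_n -> Rl * Rl) (w : 'I_n -> Rl),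
     (forall i, P (pts i)) /\ (forall i, 0 <= w i) /\ \sum_(i < n) w i = 1 /\
     x = (\sum_(i < n) w i * (pts i).1, \sum_(i < n) w i * (pts i).2)].

Definition minksum (A B : set (Rl * Rl)) : set (Rl * Rl) :=
  [set x | exists a b, A a /\ B b /\ x = (a.1 + b.1, a.2 + b.2)].

Definition rayA : set (Rl * Rl) := [set p | 0 <= p.1 /\ p.2 = 0].

Definition convA (P : set (Rl * Rl)) : set (Rl * Rl) := minksum (jconv P) rayA.

Definition nuJ (N : nat) (f : jseries) : set (Rl * Rl) :=
  closure (convA (jsupp N f)).

From HB Require Import structures.
From mathcomp Require Import all_boot all_order all_algebra.
From mathcomp Require Import all_classical all_reals all_analysis.
From mathcomp Require Import Rstruct Rstruct_topology complex.
From mathcomp Require Import ring lra zify.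
Import Order.TTheory GRing.Theory Num.Theory.
Set Implicit Arguments. Unset Strict Implicit. Unset Printing Implicit Defensive.
Local Open Scope classical_set_scope.
Local Open Scope ring_scope.

(* Call a set S of lattice points tame when every linear form k + b l has
   bounded sublevel sets on S; supports of elements of R_J(N) are tame because
   they lie above a parabola.  For tame S the set conv(S; A) is already closed
   and equals the intersection of the half-planes
   {q | min_S (k + b l) <= q.1 + b q.2}: a point satisfying all these
   inequalities lies to the right of the segment joining a point of S above it
   and a point of S below it whose admissible slopes overlap.  For f, g in
   R_J(N) the minimum of k + b l on supp(fg) is the sum of the minima on supp f
   and supp g, since at the sum of the two minimising points with least l the
   Cauchy product has a single nonzero term.  So the half-plane descriptions add
   up, and supp(fg) <= supp f + supp g gives the other inclusion. *)

Lemma bounded_argmin (P : int -> int -> bool) (F : int -> int -> Rl) (B : nat) :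
  (forall k l, P k l -> (absz k <= B)%N && (absz l <= B)%N) -> (exists k l, P k l) ->
  exists k l, P k l /\ forall k' l', P k' l' -> F k l <= F k' l'.
Proof.
move=> PB [k0 [l0 P0]].
pose emb (i : 'I_(2 * B).+1) : int := i%:Z - B%:Z.
pose idx (k : int) : 'I_(2 * B).+1 := inord (absz (k + B%:Z)).
have emb_idx k : (absz k <= B)%N -> emb (idx k) = k.
  by move=> kB; rewrite /emb /idx inordK; lia.
pose Q := [pred ij : 'I_(2 * B).+1 * 'I_(2 * B).+1 | P (emb ij.1) (emb ij.2)].
have Q0 : Q (idx k0, idx l0).
  by have /andP[/emb_idx Ek /emb_idx El] := PB _ _ P0; rewrite /= Ek El.
case: (arg_minP (fun ij => F (emb ij.1) (emb ij.2)) Q0) => -[i j] Qij Hmin.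
exists (emb i), (emb j); split => // k l Pkl.
have /andP[/emb_idx Ek /emb_idx El] := PB _ _ Pkl.
by rewrite -Ek -El; apply: (Hmin (idx k, idx l)); rewrite /= Ek El.
Qed.

(** * Tame sets of lattice points *)

Definition lin (b : Rl) (k l : int) : Rl := k%:~R + b * l%:~R.

Lemma linD b k l k' l' : lin b (k + k') (l + l') = lin b k l + lin b k' l'.
Proof. by rewrite /lin !intrD; ring. Qed.

Definition tame (S : int -> int -> bool) : Prop :=
  forall b C : Rl, exists B : nat, forall k l, S k l -> lin b k l <= C ->
    (absz k <= B)%N && (absz l <= B)%N.

Section Tame.
Variable S : int -> int -> bool.
Hypothesis tameS : tame S.

Lemma tame_lbound : exists k0 : int, forall k l, S k l -> k0 <= k.
Proof.
have [B HB] := tameS 0 0; exists (- B%:Z) => k l Skl.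
case: (leP k 0) => [k_le0 | k_gt0]; last lia.
have /andP[kB _] : (absz k <= B)%N && (absz l <= B)%N.
  by apply: HB Skl _; rewrite /lin mul0r addr0 lerz0.
lia.
Qed.

Lemma tame_argmin (P : int -> int -> bool) (F : int -> int -> Rl) b C :
  (forall k l, P k l -> S k l && (lin b k l <= C)) -> (exists k l, P k l) ->
  exists k l, P k l /\ forall k' l', P k' l' -> F k l <= F k' l'.
Proof.
move=> PS; have [B HB] := tameS b C; apply: (@bounded_argmin _ _ B) => k l /PS /andP[].
exact: HB.
Qed.

Definition is_vertex b k l := [/\ S k l,
  forall k' l', S k' l' -> lin b k l <= lin b k' l' &
  forall k' l', S k' l' -> lin b k' l' = lin b k l -> l <= l'].

Lemma vertex_exists b : (exists k l, S k l) -> exists k l, is_vertex b k l.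
Proof.
move=> [k0 [l0 S0]]; set C := lin b k0 l0.
have [k1 [l1 [/andP[S1 le1C] min1]]] :
    exists k l, (S k l && (lin b k l <= C)) /\
      forall k' l', S k' l' && (lin b k' l' <= C) -> lin b k l <= lin b k' l'.
  apply: (@tame_argmin _ (lin b) b C) => //.
  by exists k0, l0; rewrite S0 lexx.
have lin_min k l : S k l -> lin b k1 l1 <= lin b k l.
  move=> Skl; case: (leP (lin b k l) C) => [le_klC | /ltW C_le]; first by apply: min1; rewrite Skl.
  exact: le_trans le1C C_le.
have [k [l [/andP[Skl /eqP Ekl] minl]]] :
    exists k l, (S k l && (lin b k l == lin b k1 l1)) /\
      forall k' l', S k' l' && (lin b k' l' == lin b k1 l1) -> (l%:~R : Rl) <= l'%:~R.
  apply: (@tame_argmin _ (fun _ l => l%:~R) b C); last by exists k1, l1; rewrite S1 eqxx.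
  by move=> k l /andP[-> /eqP ->].
exists k, l; split=> // [k' l' /lin_min | k' l' Sk'l' E']; first by rewrite Ekl.
by rewrite -(ler_int Rl); apply: (minl k'); rewrite Sk'l' E' Ekl eqxx.
Qed.

End Tame.

Lemma tame_reflect S : tame S -> tame (fun k l => S k (- l)).
Proof.
move=> tameS b C; have [B HB] := tameS (- b) C; exists B => k l Skl le_C.
have /andP[-> ] : (absz k <= B)%N && (absz (- l) <= B)%N.
  by apply: HB Skl _; move: le_C; rewrite /lin mulrNz mulNr mulrN opprK.
by rewrite abszN.
Qed.

(** * Two-point witnesses *)

Lemma lin_le_upper (k l X Y s : Rl) : Y < l ->
  (k + s * l <= X + s * Y) = (s <= (X - k) / (l - Y)).
Proof. by move=> Yl; rewrite ler_pdivlMr ?subr_gt0 //; apply/idP/idP; lra. Qed.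

Lemma lin_le_lower (k l X Y s : Rl) : l < Y ->
  (k + s * l <= X + s * Y) = ((X - k) / (l - Y) <= s).
Proof. by move=> lY; rewrite ler_ndivrMr ?subr_lt0 //; apply/idP/idP; lra. Qed.

Lemma segment_crossing (k1 l1 k2 l2 X Y s : Rl) : l2 < Y < l1 ->
  k1 + s * l1 <= X + s * Y -> k2 + s * l2 <= X + s * Y ->
  exists w, [/\ 0 <= w <= 1, w * l1 + (1 - w) * l2 = Y & w * k1 + (1 - w) * k2 <= X].
Proof.
move=> /andP[l2Y Yl1] le1 le2.
have d_gt0 : 0 < l1 - l2 by lra.
exists ((Y - l2) / (l1 - l2)); set w := (Y - l2) / (l1 - l2).
have w_ge0 : 0 <= w by apply: divr_ge0; lra.
have w_le1 : w <= 1 by rewrite ler_pdivrMr // mul1r; lra.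
have Ew : w * l1 + (1 - w) * l2 = Y.
  by rewrite /w; field; rewrite gt_eqF.
split; [by rewrite w_ge0 | exact: Ew |].
have w'_ge0 : 0 <= 1 - w by lra.
have : w * (k1 + s * l1) + (1 - w) * (k2 + s * l2) <= X + s * Y.
  have -> : X + s * Y = w * (X + s * Y) + (1 - w) * (X + s * Y) by ring.
  by apply: lerD; apply: ler_wpM2l.
suff -> : w * (k1 + s * l1) + (1 - w) * (k2 + s * l2) =
  w * k1 + (1 - w) * k2 + s * Y by lra.
by rewrite -Ew; ring.
Qed.

Definition below (s : Rl) (k l : int) (X Y : Rl) : bool := lin s k l <= X + s * Y.

Lemma below_reflect s k l X Y : below (- s) k (- l) X (- Y) = below s k l X Y.
Proof. by rewrite /below /lin mulrNz !mulrNN. Qed.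

Lemma upper_max_slope S X Y : tame S -> (exists k l, S k l /\ Y < l%:~R) ->
  exists k1 l1, [/\ S k1 l1, Y < l1%:~R &
    forall s k l, S k l -> Y < l%:~R -> below s k l X Y -> below s k1 l1 X Y].
Proof.
move=> tameS [k0 [l0 [S0 Yl0]]].
pose slope k l : Rl := (X - k%:~R) / (l%:~R - Y).
have below_slope s k l : Y < l%:~R -> below s k l X Y = (s <= slope k l).
  exact: lin_le_upper.
set c := slope k0 l0.
have [k1 [l1 [/and3P[S1 Yl1 c_le1] max1]]] :
    exists k l, [&& S k l, Y < l%:~R & c <= slope k l] /\
      forall k' l', [&& S k' l', Y < l'%:~R & c <= slope k' l'] -> - slope k l <= - slope k' l'.
  apply: (@tame_argmin _ tameS _ _ c (X + c * Y)); last by exists k0, l0; rewrite S0 Yl0 lexx.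
  by move=> k l /and3P[-> Yl]; rewrite -below_slope.
exists k1, l1; split => // s k l Skl Ykl; rewrite !below_slope // => le_s.
case: (leP c (slope k l)) => [c_le | /ltW lt_c].
  by apply: le_trans le_s _; rewrite -lerN2; apply: max1; rewrite Skl Ykl c_le.
exact: le_trans le_s (le_trans lt_c c_le1).
Qed.

Lemma lower_max_slope S X Y : tame S -> (exists k l, S k l /\ l%:~R < Y) ->
  exists k2 l2, [/\ S k2 l2, l2%:~R < Y &
    forall s k l, S k l -> l%:~R < Y -> below s k l X Y -> below s k2 l2 X Y].
Proof.
move=> /tame_reflect tameS' [k0 [l0 [S0 l0Y]]].
have [|k2 [l2 [S2 Yl2 max2]]] := @upper_max_slope _ X (- Y) tameS'.
  by exists k0, (- l0); rewrite opprK mulrNz ltrN2.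
exists k2, (- l2); split => [//||s k l Skl lY].
  by rewrite mulrNz -ltrN2 opprK.
rewrite -below_reflect -[below s k2 _ _ _]below_reflect opprK.
by apply: max2; rewrite ?opprK // mulrNz ltrN2.
Qed.

Lemma exists_upper S X Y : tame S ->
  (forall s, exists k l, S k l /\ below s k l X Y) ->
  (forall k l, S k l -> l%:~R = Y -> X < k%:~R) ->
  exists k l, S k l /\ Y < l%:~R.
Proof.
move=> tameS hyp level; have [k0 lb] := tame_lbound tameS.
apply: contrapT => no_upper.
have le_Y k l : S k l -> (l%:~R : Rl) <= Y.
  by move=> Skl; rewrite leNgt; apply/negP => Yl; apply: no_upper; exists k, l.
(* Since l is an integer, points below Y lie at least Y - m below it, so a
   steep enough slope - T can only be met by a point at height Y. *)
set m := Num.ceil Y - 1.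
have gap_gt0 : 0 < Y - m%:~R by have := ceilB1_lt Y; rewrite -/m; lra.
have [T [T_ge0 TE]] : exists T, 0 <= T /\ T * (Y - m%:~R) = `|X - k0%:~R| + 1.
  exists ((`|X - k0%:~R| + 1) / (Y - m%:~R)).
  by rewrite mulfVK ?gt_eqF // divr_ge0 // ?ltW // addr_ge0.
have [k [l [Skl]]] := hyp (- T); rewrite /below /lin => below_T.
have := lb _ _ Skl; rewrite -(ler_int Rl) => k0_le.
have := ler_norm (X - k0%:~R).
have [El | neY] := eqVneq (l%:~R : Rl) Y.
  by have := level _ _ Skl El; rewrite El in below_T; lra.
have l_le_m : (l%:~R : Rl) <= m%:~R.
  rewrite ler_int /m; suff : l < Num.ceil Y by lia.
  by rewrite ltNge ceil_le_int -ltNge lt_neqAle neY (le_Y _ _ Skl).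
have : T * (Y - m%:~R) <= T * (Y - l%:~R) by apply: ler_wpM2l => //; lra.
lra.
Qed.

Lemma exists_lower S X Y : tame S ->
  (forall s, exists k l, S k l /\ below s k l X Y) ->
  (forall k l, S k l -> l%:~R = Y -> X < k%:~R) ->
  exists k l, S k l /\ l%:~R < Y.
Proof.
move=> /tame_reflect tameS' hyp level.
have [||k [l [Skl Yl]]] := @exists_upper _ X (- Y) tameS'.
- move=> s; have [k [l [Skl bl]]] := hyp (- s).
  by exists k, (- l); rewrite opprK -[s]opprK below_reflect.
- by move=> k l Skl El; apply: (level _ _ Skl); rewrite mulrNz El opprK.
- by exists k, (- l); split; rewrite // mulrNz ltrNl.
Qed.

Lemma common_slope S X Y k1 l1 k2 l2 : Y < l1%:~R -> l2%:~R < Y ->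
  (forall s k l, S k l -> Y < l%:~R -> below s k l X Y -> below s k1 l1 X Y) ->
  (forall s k l, S k l -> l%:~R < Y -> below s k l X Y -> below s k2 l2 X Y) ->
  (forall s, exists k l, S k l /\ below s k l X Y) ->
  (forall k l, S k l -> l%:~R = Y -> X < k%:~R) ->
  exists s, below s k1 l1 X Y && below s k2 l2 X Y.
Proof.
move=> Yl1 l2Y max1 max2 hyp level.
set a := (X - k1%:~R) / (l1%:~R - Y); set c := (X - k2%:~R) / (l2%:~R - Y).
have below1 s : below s k1 l1 X Y = (s <= a) by exact: lin_le_upper.
have below2 s : below s k2 l2 X Y = (c <= s) by exact: lin_le_lower.
(* p1 is below for the slopes s <= a and p2 for s >= c; if a < c, the slope
   (a + c) / 2 is met by no point of S. *)
case: (leP c a) => [c_le_a | a_lt_c]; first by exists a; rewrite below1 below2 lexx c_le_a.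
have [k [l [Skl bl]]] := hyp ((a + c) / 2).
case: (ltgtP (l%:~R : Rl) Y) => [lY | Yl | lY].
- by have := max2 _ _ _ Skl lY bl; rewrite below2; lra.
- by have := max1 _ _ _ Skl Yl bl; rewrite below1; lra.
- by have := level _ _ Skl lY; move: bl; rewrite /below /lin lY; lra.
Qed.

Lemma two_point_witness S X Y : tame S ->
  (forall s, exists k l, S k l /\ below s k l X Y) ->
  exists k1 l1 k2 l2 (w : Rl), [/\ S k1 l1, S k2 l2, 0 <= w <= 1,
    w * l1%:~R + (1 - w) * l2%:~R = Y & w * k1%:~R + (1 - w) * k2%:~R <= X].
Proof.
move=> tameS hyp.
case: (pselect (exists k l, [/\ S k l, l%:~R = Y & k%:~R <= X])) => [[k [l [Skl El Ek]]] | no_level].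
  exists k, l, k, l, 1; split; rewrite ?ler01 ?lexx //; [by rewrite -El; ring | lra].
have level k l : S k l -> l%:~R = Y -> X < k%:~R.
  by move=> Skl El; rewrite ltNge; apply/negP => kX; apply: no_level; exists k, l.
have [k1 [l1 [S1 Yl1 max1]]] := upper_max_slope X tameS (exists_upper tameS hyp level).
have [k2 [l2 [S2 l2Y max2]]] := lower_max_slope X tameS (exists_lower tameS hyp level).
have [s /andP[b1 b2]] := common_slope Yl1 l2Y max1 max2 hyp level.
have [w [w01 Ew Ek]] := segment_crossing (introT andP (conj l2Y Yl1)) b1 b2.
by exists k1, l1, k2, l2, w.
Qed.

(** * Convex hulls in the plane *)

Definition rlin (s : Rl) (q : Rl * Rl) : Rl := q.1 + s * q.2.

Lemma rlin_minksum s a b : rlin s (a.1 + b.1, a.2 + b.2) = rlin s a + rlin s b.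
Proof. by rewrite /rlin /=; ring. Qed.

Lemma minksumS (A A' B B' : set (Rl * Rl)) :
  A `<=` A' -> B `<=` B' -> minksum A B `<=` minksum A' B'.
Proof. by move=> AA' BB' _ [a [b [Aa [Bb ->]]]]; exists a, b; do !split; [apply: AA' | apply: BB']. Qed.

Lemma jconvS (P Q : set (Rl * Rl)) : P `<=` Q -> jconv P `<=` jconv Q.
Proof.
move=> PQ _ [n [pts [w [Ppts [w_ge0 [w1 ->]]]]]].
by exists n, pts, w; split => // i; apply: PQ.
Qed.

Lemma convAS (P Q : set (Rl * Rl)) : P `<=` Q -> convA P `<=` convA Q.
Proof. by move=> PQ; apply: minksumS => //; apply: jconvS. Qed.

Lemma jconv_sub_convA (P : set (Rl * Rl)) : jconv P `<=` convA P.
Proof. by move=> a Pa; exists a, (0, 0); split => //; rewrite /= !addr0; case: a {Pa}. Qed.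

Lemma jconv_minksum (P Q : set (Rl * Rl)) :
  jconv (minksum P Q) `<=` minksum (jconv P) (jconv Q).
Proof.
move=> _ [n [pts [w [PQpts [w_ge0 [w1 ->]]]]]].
have split_pts i : exists ab : (Rl * Rl) * (Rl * Rl),
    [/\ P ab.1, Q ab.2 & pts i = (ab.1.1 + ab.2.1, ab.1.2 + ab.2.2)].
  by have [a [b [Pa [Qb ->]]]] := PQpts i; exists (a, b).
have [F HF] := choice split_pts.
exists (\sum_(i < n) w i * (F i).1.1, \sum_(i < n) w i * (F i).1.2).
exists (\sum_(i < n) w i * (F i).2.1, \sum_(i < n) w i * (F i).2.2).
split; [|split].
- by exists n, (fun i => (F i).1), w; split => // i; have [] := HF i.
- by exists n, (fun i => (F i).2), w; split => // i; have [] := HF i.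
- by congr pair; rewrite /= -big_split /=; apply: eq_bigr => i _;
    have [_ _ ->] := HF i; rewrite mulrDr.
Qed.

Lemma convA_minksum (P Q : set (Rl * Rl)) :
  convA (minksum P Q) `<=` minksum (convA P) (convA Q).
Proof.
move=> _ [a [c [/jconv_minksum [x [y [Px [Qy ->]]]] [ray ->]]]].
exists (x.1 + c.1, x.2 + c.2), y; split; [|split].
- by exists x, c.
- exact: jconv_sub_convA.
- by congr pair; rewrite /=; ring.
Qed.

Lemma convA_sub_halfplane (P : set (Rl * Rl)) s m :
  (forall p, P p -> m <= rlin s p) -> convA P `<=` [set q | m <= rlin s q].
Proof.
move=> Pm _ [_ [c [[n [pts [w [Ppts [w_ge0 [w1 ->]]]]]] [[c1_ge0 c2_0] ->]]]].
rewrite /= /rlin /= c2_0 addr0.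
have -> : \sum_(i < n) w i * (pts i).1 + c.1 + s * \sum_(i < n) w i * (pts i).2 =
    \sum_(i < n) w i * rlin s (pts i) + c.1.
  by rewrite mulr_sumr addrAC -big_split /=; congr (_ + _); apply: eq_bigr => i _; rewrite /rlin; ring.
have -> : m = \sum_(i < n) w i * m by rewrite -mulr_suml w1 mul1r.
by rewrite -[leLHS]addr0 lerD // ler_sum // => i _; rewrite ler_wpM2l ?Pm.
Qed.

Lemma closed_halfplane s m : closed [set q : Rl * Rl | m <= rlin s q].
Proof.
have rlin_cont : continuous (rlin s).
  move=> q; apply: (@cvgD _ Rl^o); first exact: cvg_fst.
  by apply: cvgM; [exact: cvg_cst | exact: cvg_snd].
have := (continuous_closedP (rlin s)).1 rlin_cont [set x | m <= x].
by apply; exact: closed_ge.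
Qed.

Lemma convA_two_points (P : set (Rl * Rl)) p1 p2 (w : Rl) q :
  P p1 -> P p2 -> 0 <= w <= 1 ->
  w * p1.2 + (1 - w) * p2.2 = q.2 -> w * p1.1 + (1 - w) * p2.1 <= q.1 -> convA P q.
Proof.
move=> Pp1 Pp2 /andP[w_ge0 w_le1] E2 le1.
pose pts (i : 'I_2) := if i == ord0 then p1 else p2.
pose ws (i : 'I_2) := if i == ord0 then w else 1 - w.
exists (w * p1.1 + (1 - w) * p2.1, w * p1.2 + (1 - w) * p2.2), (q.1 - (w * p1.1 + (1 - w) * p2.1), 0).
split; [|split].
- exists 2%N, pts, ws; rewrite !big_ord_recl !big_ord0 /ws /pts /= !addr0.
  split; first by move=> i; case: ifP.
  split; first by move=> i; case: ifP => _; lra.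
  by split; first ring.
- by split => //=; rewrite subr_ge0.
- by case: q E2 {le1} => x y /= ->; rewrite addr0; congr pair; ring.
Qed.

(** * Supports of Jacobi series *)

Definition lsupp (f : jseries) (k l : int) : bool := f k l != 0.

Lemma jmul_supp (f g : jseries) k l : lsupp (jmul f g) k l ->
  exists k1 l1, lsupp f k1 l1 /\ lsupp g (k - k1) (l - l1).
Proof.
move=> H; apply: contrapT => Hn; move/eqP: H; apply.
apply: fsbig1 => -[k1 l1] _ /=.
case: (eqVneq (f k1 l1) 0) => [-> | f1]; first by rewrite mul0r.
case: (eqVneq (g (k - k1) (l - l1)) 0) => [-> | g1]; first by rewrite mulr0.
by exfalso; apply: Hn; exists k1, l1.
Qed.

Section Vertex.
Variables (f g : jseries) (b : Rl) (k1 l1 k2 l2 : int).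
Hypotheses (vf : is_vertex (lsupp f) b k1 l1) (vg : is_vertex (lsupp g) b k2 l2).

Lemma jmul_vertex : jmul f g (k1 + k2) (l1 + l2) = f k1 l1 * g k2 l2.
Proof.
have [_ min_f tie_f] := vf; have [_ min_g tie_g] := vg.
rewrite /jmul -(@fsbig_widen _ _ _ _ [set (k1, l1)] setT) //.
  by rewrite fsbig_set1 /= addrC addKr addrC addKr.
move=> -[k l] [_ /= kl_ne]; apply/eqP.
case: (eqVneq (f k l) 0) => [-> | fkl]; first by rewrite mul0r.
case: (eqVneq (g (k1 + k2 - k) (l1 + l2 - l)) 0) => [-> | gkl]; first by rewrite mulr0.
exfalso; apply: kl_ne.
have le_f := min_f _ _ fkl; have le_g := min_g _ _ gkl.
have E : lin b k l + lin b (k1 + k2 - k) (l1 + l2 - l) = lin b k1 l1 + lin b k2 l2.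
  by rewrite -!linD; congr lin; ring.
have Ef : lin b k l = lin b k1 l1 by lra.
have Eg : lin b (k1 + k2 - k) (l1 + l2 - l) = lin b k2 l2 by lra.
have l_eq : l = l1 by have := tie_f _ _ fkl Ef; have := tie_g _ _ gkl Eg; lia.
by move: Ef; rewrite /lin l_eq => /addIr/eqP; rewrite eqr_int => /eqP->.
Qed.

Lemma lsupp_jmul_vertex : lsupp (jmul f g) (k1 + k2) (l1 + l2).
Proof. by have [f1 _ _] := vf; have [g2 _ _] := vg; rewrite /lsupp jmul_vertex mulf_neq0. Qed.

End Vertex.

Lemma tame_jmul f g : tame (lsupp f) -> tame (lsupp g) ->
  nonzero_series f -> nonzero_series g -> tame (lsupp (jmul f g)).
Proof.
move=> tf tg nzf nzg b C.
have [k1 [l1 [_ min_f _]]] := vertex_exists tf b nzf.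
have [k2 [l2 [_ min_g _]]] := vertex_exists tg b nzg.
have [Bf HBf] := tf b (C - lin b k2 l2); have [Bg HBg] := tg b (C - lin b k1 l1).
exists (Bf + Bg)%N => k l /jmul_supp [a [c [fac gac]]] le_C.
have E : lin b a c + lin b (k - a) (l - c) = lin b k l by rewrite -linD; congr lin; ring.
have := min_f _ _ fac; have := min_g _ _ gac => ge_g ge_f.
have /andP[] : (absz a <= Bf)%N && (absz c <= Bf)%N by apply: HBf fac _; lra.
have /andP[] : (absz (k - a) <= Bg)%N && (absz (l - c) <= Bg)%N by apply: HBg gac _; lra.
lia.
Qed.

Lemma quadratic_sublevel_bounded (a p q : Rl) : 0 < a ->
  exists R : Rl, forall y : Rl, a * y ^+ 2 <= p * y + q -> `|y| <= R.
Proof.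
move=> a_gt0; exists (1 + (`|p| + `|q|) / a) => y le_pq.
have pq_ge0 : 0 <= `|p| + `|q| by rewrite addr_ge0.
case: (leP `|y| 1) => [y_le1 | y_gt1].
  by apply: le_trans y_le1 _; rewrite lerDl divr_ge0 // ltW.
suff : `|y| <= (`|p| + `|q|) / a by lra.
rewrite ler_pdivlMr // mulrC -(ler_pM2r (lt_trans ltr01 y_gt1)) -mulrA -normrM -expr2.
rewrite ger0_norm ?sqr_ge0 //; apply: le_trans le_pq _.
have := ler_norm (p * y); have := ler_norm q; rewrite normrM.
have : `|q| <= `|q| * `|y| by rewrite ler_peMr // ltW.
lra.
Qed.

Lemma parabola_sublevel_bounded (a b c s C : Rl) : 0 < a ->
  exists R : Rl, forall x y : Rl, a * y ^+ 2 + b * y + c <= x -> x + s * y <= C ->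
    `|x| <= R /\ `|y| <= R.
Proof.
move=> a_gt0; have [R0 HR0] := quadratic_sublevel_bounded (- (b + s)) (C - c) a_gt0.
exists (R0 + `|C| + (`|s| + `|b|) * R0 + `|c|) => x y above below.
have yR0 : `|y| <= R0 by apply: HR0; lra.
have R0_ge0 : 0 <= R0 by apply: le_trans yR0.
have sy : `|s * y| <= `|s| * R0 by rewrite normrM ler_wpM2l.
have by_ : `|b * y| <= `|b| * R0 by rewrite normrM ler_wpM2l.
have sy' := ler_norm (- (s * y)); have by' := ler_norm (- (b * y)).
rewrite normrN in sy'; rewrite normrN in by'.
have C' := ler_norm C; have c' := ler_norm (- c); rewrite normrN in c'.
have sR0 := mulr_ge0 (normr_ge0 s) R0_ge0; have bR0 := mulr_ge0 (normr_ge0 b) R0_ge0.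
have ay2 : 0 <= a * y ^+ 2 by rewrite mulr_ge0 ?sqr_ge0 // ltW.
have := normr_ge0 c; have := normr_ge0 C.
split; last by lra.
rewrite ler_norml; apply/andP; split; lra.
Qed.

Lemma absz_le_ceil (k : int) (X : Rl) : `|(k%:~R : Rl)| <= X ->
  (absz k <= absz (Num.ceil X))%N.
Proof.
move=> kX; have : `|k| <= Num.ceil X.
  by rewrite -(ler_int Rl) intr_norm; exact: le_trans kX (ceil_ge X).
lia.
Qed.

Lemma tame_RJ N f : (0 < N)%N -> inRJ N f -> tame (lsupp f).
Proof.
move=> N_gt0 [_ [a [b [c [a_gt0 parab]]]]] s C.
have NR_gt0 : (0 : Rl) < N%:R by rewrite ltr0n.
have [R HR] := parabola_sublevel_bounded b c s (C / N%:R) a_gt0.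
exists (absz (Num.ceil (N%:R * R))) => k l fkl le_C.
have scale (m : int) : (m%:~R : Rl) = N%:R * (m%:~R / N%:R).
  by rewrite mulrCA divff ?mulr1 // gt_eqF.
have [xR yR] : `|k%:~R / N%:R| <= R /\ `|(l%:~R : Rl) / N%:R| <= R.
  apply: HR; first by apply: (parab (_, _)); exists k, l.
  have -> : k%:~R / N%:R + s * (l%:~R / N%:R) = lin s k l / N%:R by rewrite /lin mulrDl mulrA.
  by rewrite ler_pM2r ?invr_gt0.
by apply/andP; split; apply: absz_le_ceil;
  rewrite scale normrM (ger0_norm (ltW NR_gt0)) ler_pM2l.
Qed.

(** * The Jacobi valuation *)

Section LatticePoints.
Variable N : nat.
Hypothesis N_gt0 : (0 < N)%N.

Let NR_gt0 : (0 : Rl) < N%:R. Proof. by rewrite ltr0n. Qed.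
Let NR_neq0 : (N%:R : Rl) != 0. Proof. exact: lt0r_neq0. Qed.

Definition pt (k l : int) : Rl * Rl := (k%:~R / N%:R, l%:~R / N%:R).

Definition lattice_pts (S : int -> int -> bool) : set (Rl * Rl) :=
  [set p | exists k l, S k l /\ p = pt k l].

(* The half-planes {q | min_S (k + s l) / N <= rlin s q}, with the minimum
   replaced by an arbitrary point of S below q. *)
Definition halfplanes (S : int -> int -> bool) : set (Rl * Rl) :=
  [set q | forall s, exists k l, S k l /\ rlin s (pt k l) <= rlin s q].

Lemma rlin_pt s k l : rlin s (pt k l) = lin s k l / N%:R.
Proof. by rewrite /rlin /lin /= mulrDl mulrA. Qed.

Lemma pt_add k l k' l' :
  pt (k + k') (l + l') = ((pt k l).1 + (pt k' l').1, (pt k l).2 + (pt k' l').2).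
Proof. by rewrite /pt /= !intrD !mulrDl. Qed.

Lemma closure_convA_sub_halfplanes S : tame S -> (exists k l, S k l) ->
  closure (convA (lattice_pts S)) `<=` halfplanes S.
Proof.
move=> tameS nzS q cl_q s; have [k [l [Skl min_kl _]]] := vertex_exists tameS s nzS.
exists k, l; split => //.
suff : closure (convA (lattice_pts S)) `<=` [set q | rlin s (pt k l) <= rlin s q] by apply.
rewrite (closure_id [set q | rlin s (pt k l) <= rlin s q]).1; last exact: closed_halfplane.
apply/closureS/convA_sub_halfplane => _ [k' [l' [Sk'l' ->]]].
by rewrite !rlin_pt ler_pM2r ?invr_gt0 ?min_kl.
Qed.

Lemma halfplanes_sub_convA S : tame S -> halfplanes S `<=` convA (lattice_pts S).
Proof.
move=> tameS q Hq.
have [|k1 [l1 [k2 [l2 [w [S1 S2 w01 El Ek]]]]]] := @two_point_witness S (N%:R * q.1) (N%:R * q.2) tameS.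
  move=> s; have [k [l [Skl le_q]]] := Hq s; exists k, l; split => //.
  move: le_q; rewrite rlin_pt ler_pdivrMr // /below.
  by have -> : N%:R * q.1 + s * (N%:R * q.2) = rlin s q * N%:R by rewrite /rlin; ring.
have comb a b : w * (a / N%:R) + (1 - w) * (b / N%:R) = (w * a + (1 - w) * b) / N%:R.
  by ring.
apply: (convA_two_points (p1 := pt k1 l1) (p2 := pt k2 l2) (w := w)) => //=.
- by exists k1, l1.
- by exists k2, l2.
- by rewrite comb El mulrC (mulKf NR_neq0).
- by rewrite comb (ler_pdivrMr _ _ NR_gt0) (mulrC q.1).
Qed.

Lemma convA_lattice_halfplanes S : tame S -> (exists k l, S k l) ->
  convA (lattice_pts S) = halfplanes S.
Proof.
move=> tameS nzS; apply/seteqP; split; last exact: halfplanes_sub_convA.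
by move=> q /subset_closure /(closure_convA_sub_halfplanes tameS nzS).
Qed.

Lemma closure_convA_lattice S : tame S -> (exists k l, S k l) ->
  closure (convA (lattice_pts S)) = convA (lattice_pts S).
Proof.
move=> tameS nzS; apply/seteqP; split; last exact: subset_closure.
by rewrite [X in _ `<=` X]convA_lattice_halfplanes //; apply: closure_convA_sub_halfplanes.
Qed.

Lemma jsupp_jmul (f g : jseries) :
  jsupp N (jmul f g) `<=` minksum (jsupp N f) (jsupp N g).
Proof.
move=> _ [k [l [/jmul_supp [k1 [l1 [f1 g1]]] ->]]].
exists (pt k1 l1), (pt (k - k1) (l - l1)); split; first by exists k1, l1.
split; first by exists (k - k1), (l - l1).
by rewrite -pt_add !subrKC.
Qed.

Lemma halfplanes_jmul f g : tame (lsupp f) -> tame (lsupp g) ->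
  nonzero_series f -> nonzero_series g ->
  minksum (halfplanes (lsupp f)) (halfplanes (lsupp g)) `<=` halfplanes (lsupp (jmul f g)).
Proof.
move=> tf tg nzf nzg _ [a [b [Ha [Hb ->]]]] s.
have [k1 [l1 vf]] := vertex_exists tf s nzf; have [k2 [l2 vg]] := vertex_exists tg s nzg.
exists (k1 + k2), (l1 + l2); split; first exact: lsupp_jmul_vertex vf vg.
have [kf [lf [ff le_a]]] := Ha s; have [kg [lg [gg le_b]]] := Hb s.
have [_ min_f _] := vf; have [_ min_g _] := vg.
have le_f : rlin s (pt k1 l1) <= rlin s (pt kf lf) by rewrite !rlin_pt ler_pM2r ?invr_gt0 ?min_f.
have le_g : rlin s (pt k2 l2) <= rlin s (pt kg lg) by rewrite !rlin_pt ler_pM2r ?invr_gt0 ?min_g.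
rewrite pt_add !rlin_minksum; lra.
Qed.

End LatticePoints.

Theorem theorem4p5 (N : nat) (f g : jseries) :
  (0 < N)%N -> inRJ N f -> inRJ N g -> nonzero_series f -> nonzero_series g ->
  nuJ N (jmul f g) = minksum (nuJ N f) (nuJ N g).
Proof.
move=> N_gt0 RJf RJg nzf nzg.
have tf := tame_RJ N_gt0 RJf; have tg := tame_RJ N_gt0 RJg.
have nzfg : nonzero_series (jmul f g).
  have [k1 [l1 vf]] := vertex_exists tf 0 nzf; have [k2 [l2 vg]] := vertex_exists tg 0 nzg.
  by exists (k1 + k2), (l1 + l2); exact: lsupp_jmul_vertex vf vg.
have tfg := tame_jmul tf tg nzf nzg.
rewrite /nuJ -!/(lattice_pts N _) !closure_convA_lattice //.
apply/seteqP; split.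
- by move=> q /(convAS (@jsupp_jmul N f g)) /convA_minksum.
- by rewrite !convA_lattice_halfplanes //; apply: halfplanes_jmul.
Qed.
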